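(* Let $X$ be a complex Banach space, $T\in B(X)$ a Fredholm operator, and $(T_n)$ a sequence in $B(X)$ with $T_n\overset{\nu}{\to}T$. Then $[\limsup\sigma_{ap}(T_n)]\setminus\{0\}\subseteq\sigma_{ap}(T)$.
   Context: $\sigma_{ap}(S)=\{\lambda\in\mathbb{C}: S-\lambda \text{ is not bounded below}\}$. For subsets $E_n\subseteq\mathbb{C}$, $\limsup E_n$ is the set of $\lambda$ such that for every $\epsilon>0$ the ball $B(\lambda,\epsilon)$ meets $E_n$ for infinitely many $n$. $T_n\overset{\nu}{\to}T$ means $(\|T_n\|)$ is bounded, $\|(T_n-T)T\|\to0$ and $\|(T_n-T)T_n\|\to0$. *)

From mathcomp Require Import all_boot all_order all_algebra.
From mathcomp Require Import all_classical all_reals all_analysis.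
From mathcomp Require Export complex.
Import Order.TTheory GRing.Theory Num.Theory.
Import numFieldNormedType.Exports.
Set Implicit Arguments. Unset Strict Implicit. Unset Printing Implicit Defensive.
Local Open Scope ring_scope.
Local Open Scope classical_set_scope.

Section Defs.
Variables (R : realType) (X : normedModType R[i]).

Definition bounded_op (T : {linear X -> X}) : Prop := continuous T.

Definition bounded_below (S : X -> X) : Prop :=
  exists c : R[i], 0 < c /\ forall x : X, c * `|x| <= `|S x|.

Definition ap_spectrum (S : X -> X) : set R[i] :=
  [set lam | ~ bounded_below (fun x => S x - lam *: x)].

Definition limsup_sets (E : nat -> set R[i]) : set R[i] :=
  [set lam | forall eps : R[i], 0 < eps ->
     forall N : nat, exists n : nat, (N <= n)%N /\
       exists mu, E n mu /\ `|mu - lam| < eps].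

Definition finite_dim (V : set X) : Prop :=
  exists s : seq X, forall x, V x ->
    exists c : nat -> R[i], x = \sum_(i < size s) c i *: s`_i.

Definition fredholm (T : {linear X -> X}) : Prop :=
  [/\ bounded_op T,
      finite_dim [set x | T x = 0],
      closed (range T) &
      exists s : seq X, forall y : X, exists (x : X) (c : nat -> R[i]),
        y = T x + \sum_(i < size s) c i *: s`_i].

(* the operator A has norm tending to 0 along the sequence:
   ||A n|| -> 0, written out as ||A n x|| <= eps ||x|| eventually *)
Definition opnorm_to0 (A : nat -> X -> X) : Prop :=
  forall eps : R[i], 0 < eps -> exists N : nat, forall n : nat, (N <= n)%N ->
    forall x : X, `|A n x| <= eps * `|x|.

Definition nu_conv (Tn : nat -> {linear X -> X}) (T : {linear X -> X}) : Prop :=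
  [/\ exists M : R[i], forall n x, `|Tn n x| <= M * `|x|,
      opnorm_to0 (fun n x => Tn n (T x) - T (T x)) &
      opnorm_to0 (fun n x => Tn n (Tn n x) - T (Tn n x))].

End Defs.

From mathcomp Require Import all_boot all_order all_algebra.
From mathcomp Require Import all_classical all_reals all_analysis.
From mathcomp Require Import complex.
From mathcomp Require Import ring.
Import Order.TTheory GRing.Theory Num.Theory.
Import numFieldNormedType.Exports.
Local Open Scope ring_scope.
Local Open Scope classical_set_scope.

(* If T - lam is bounded below by c and mu is within min(|lam|, c)/2 of lam,
   then |mu| ||(T - mu) x|| >= |lam| c/4 ||x||.  Writing e = T_n x - mu x, the
   identity mu (T - mu) x = (T_n - T) e + mu e - (T_n - T) T_n x bounds the same
   quantity by ||(T_n - T) T_n|| ||x|| + (||T_n|| + ||T|| + |mu|) ||e||.  For n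
   large the first term is at most |lam| c/8 ||x||, so ||e|| / ||x|| stays away
   from 0 and mu is not in the approximate point spectrum of T_n. *)

Lemma scale_sub_decomp {K : pzRingType} {V : lmodType K} (S T : {linear V -> V})
    (mu : K) (x : V) :
  mu *: (T x - mu *: x) =
  S (S x - mu *: x) - T (S x - mu *: x) + mu *: (S x - mu *: x)
    - (S (S x) - T (S x)).
Proof.
rewrite [S (_ - _)]linearB [T (_ - _)]linearB [S (_ *: _)]linearZ.
rewrite [T (_ *: _)]linearZ /= !scalerBr.
rewrite [_ + (mu *: S x - _)]addrAC (subrKA (mu *: S x)) -addrA -opprD.
by rewrite [T (S x) - _ + _]addrC (subrKA (T (S x))) opprB addrC subrKA.
Qed.

Section OperatorEstimates.
Context {K : numFieldType} {V W : normedModType K}.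

Lemma continuous_linear_norm_le (f : {linear V -> W}) :
  continuous f -> exists2 k : K, 0 < k & forall x, `|f x| <= k * `|x|.
Proof. by move=> /linear_bounded_continuous/linear_boundedP/pinfty_ex_gt0. Qed.

Context {S T : {linear V -> V}} {kS kT : K}.
Hypotheses (S_le : forall x, `|S x| <= kS * `|x|) (T_le : forall x, `|T x| <= kT * `|x|).

Lemma norm_scale_sub_le (mu : K) (x : V) :
  `|mu| * `|T x - mu *: x| <=
  `|S (S x) - T (S x)| + (kS + kT + `|mu|) * `|S x - mu *: x|.
Proof.
rewrite -normrZ (scale_sub_decomp S) [leRHS]addrC.
apply: (le_trans (ler_normB _ _)); rewrite lerD2r !mulrDl.
apply: (le_trans (ler_normD _ _)); rewrite normrZ lerD2r.
by apply: (le_trans (ler_normB _ _)); apply: lerD.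
Qed.

Lemma norm_sub_scale_shift (lam mu : K) (x : V) :
  `|T x - lam *: x| <= `|T x - mu *: x| + `|mu - lam| * `|x|.
Proof.
have -> : T x - lam *: x = (T x - mu *: x) + (mu - lam) *: x.
  by rewrite scalerBl addrA subrK.
by rewrite -normrZ ler_normD.
Qed.

Lemma approx_eigen_defect_ge (lam mu c : K) (x : V) :
  0 <= c -> (forall y, c * `|y| <= `|T y - lam *: y|) ->
  `|mu - lam| <= `|lam| / 2 -> `|mu - lam| <= c / 2 ->
  `|S (S x) - T (S x)| <= `|lam| * c / 8 * `|x| ->
  `|lam| * c / 8 * `|x| <= (kS + kT + `|mu|) * `|S x - mu *: x|.
Proof.
move=> c_ge0 T_below mu_lam_le mu_lam_lec SST_le.
have mu_ge : `|lam| / 2 <= `|mu|.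
  have lam_le : `|lam| <= `|mu| + `|lam| / 2.
    have {1}-> : lam = mu - (mu - lam) by rewrite opprB subrKC.
    by apply: (le_trans (ler_normB _ _)); rewrite lerD2l.
  by rewrite -lerBlDr {1}(splitr `|lam|) addrK in lam_le.
have Tmu_ge : c / 2 * `|x| <= `|T x - mu *: x|.
  have c_le : c * `|x| <= `|T x - mu *: x| + c / 2 * `|x|.
    apply: (le_trans (T_below x)); apply: (le_trans (norm_sub_scale_shift lam mu x)).
    by rewrite lerD2l ler_wpM2r.
  by rewrite -lerBlDr {1}(splitr c) mulrDl addrK in c_le.
have lower : `|lam| * c / 4 * `|x| <= `|mu| * `|T x - mu *: x|.
  have -> : `|lam| * c / 4 * `|x| = `|lam| / 2 * (c / 2 * `|x|) by field.
  by apply: ler_pM => //; rewrite mulr_ge0 // divr_ge0.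
have upper : `|mu| * `|T x - mu *: x| <=
    `|lam| * c / 8 * `|x| + (kS + kT + `|mu|) * `|S x - mu *: x|.
  by apply: (le_trans (norm_scale_sub_le mu x)); rewrite lerD2r.
have := le_trans lower upper.
have -> : `|lam| * c / 4 * `|x| = `|lam| * c / 8 * `|x| + `|lam| * c / 8 * `|x|.
  by field.
by rewrite lerD2l.
Qed.

End OperatorEstimates.

Lemma not_bounded_below_lt {R : realType} {X : normedModType R[i]} {S : X -> X} :
  ~ bounded_below S -> forall eta : R[i], 0 < eta -> exists x, `|S x| < eta * `|x|.
Proof.
move=> S_unbdd eta eta_gt0; apply: contrapT => no_x; apply: S_unbdd.
exists eta; split => // x; apply: contrapT => eta_x; apply: no_x; exists x.
by rewrite real_ltNge ?realM ?normr_real ?gtr0_real //; apply/negP.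
Qed.

Theorem theorem3p3 (R : realType) (X : completeNormedModType R[i])
  (T : {linear X -> X}) (Tn : nat -> {linear X -> X}) :
  fredholm T ->
  (forall n, bounded_op (Tn n)) ->
  nu_conv Tn T ->
  limsup_sets (fun n => ap_spectrum (Tn n)) `\ 0 `<=` ap_spectrum T.
Proof.
move=> [T_cont _ _ _] Tn_cont [_ _ TnTn_to0] lam [lam_lim lam_neq0] [c [c_gt0 T_below]].
have lam_gt0 : 0 < `|lam| by rewrite normr_gt0; apply/eqP.
set a := `|lam| * c / 8.
have a_gt0 : 0 < a by rewrite divr_gt0 ?mulr_gt0.
have [N TnTn_le] := TnTn_to0 a a_gt0.
have cmp_half : `|lam| / 2 >=< c / 2 by rewrite real_comparable ?gtr0_real ?divr_gt0.
have delta_gt0 : 0 < Order.min (`|lam| / 2) (c / 2).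
  by rewrite comparable_lt_min // !divr_gt0.
have [n [Nn [mu [mu_ap]]]] := lam_lim _ delta_gt0 N.
rewrite comparable_lt_min // => /andP[/ltW mu_lam_le /ltW mu_lam_lec].
have [kT kT_gt0 T_le] := continuous_linear_norm_le T T_cont.
have [kS kS_gt0 S_le] := continuous_linear_norm_le (Tn n) (Tn_cont n).
have k_gt0 : 0 < kS + kT + `|mu| by rewrite ltr_wpDr // addr_gt0.
have [x x_small] := not_bounded_below_lt mu_ap _ (divr_gt0 a_gt0 k_gt0).
have defect := approx_eigen_defect_ge S_le T_le lam mu c x (ltW c_gt0) T_below
  mu_lam_le mu_lam_lec (TnTn_le n Nn x).
rewrite -(ltr_pM2l k_gt0) mulrA mulrCA divff ?mulr1 ?gt_eqF // in x_small.
by have := le_lt_trans defect x_small; rewrite ltxx.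
Qed.
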